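(* Let $X\subset\mathbb{R}^n$ be a finite set of points, $\epsilon\ge0$, $\alpha\neq0$, and let $\tau\ge1$ be an integer. Consider the gradient-normalized VCA on $(X,\epsilon)$ and on $(\alpha X,|\alpha|\epsilon)$, with degree-$t$ output parts $F_t,G_t$ and $\widehat F_t,\widehat G_t$ respectively. Suppose that for every $t\le\tau$, $|F_t|=|\widehat F_t|$, and that there is a bijection between $F^\tau\cup G^\tau$ and $\widehat F^\tau\cup\widehat G^\tau$ mapping $F_t$ onto $\widehat F_t$ and $G_t$ onto $\widehat G_t$ for each $t\le\tau$, such that each nonconstant $h$ is mapped to a polynomial $\widehat h$ that is $(1,\alpha)$-degree-wise identical to $h$. Then the same holds with $\tau$ replaced by $\tau+1$: $|F_{\tau+1}|=|\widehat F_{\tau+1}|$, and there is such a bijection between $F^{\tau+1}\cup G^{\tau+1}$ and $\widehat F^{\tau+1}\cup\widehat G^{\tau+1}$ mapping $F_t$ onto $\widehat F_t$ and $G_t$ onto $\widehat G_t$ for each $t\le\tau+1$, with each nonconstant $h$ mapped to a $(1,\alpha)$-degree-wise identical $\widehat h$.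
   Context: $\mathcal{R}_n=\mathbb{R}[x_1,\ldots,x_n]$. For $X=\{\boldsymbol x_1,\ldots,\boldsymbol x_N\}$, $\alpha X=\{\alpha\boldsymbol x_i\}$, $h(X)=(h(\boldsymbol x_1),\ldots,h(\boldsymbol x_N))^\top$; for an ordered finite set $H=\{h_1,\ldots,h_s\}$, $H(X)$ has columns $h_j(X)$; $H\boldsymbol w=\sum_jw_jh_j$, $HW=\{H\boldsymbol w_1,\ldots\}$. $\mathfrak n_{\mathrm g}(h;X)=\mathrm{vec}(\nabla h(X))$, with $\nabla h(X)$ the $N\times n$ matrix of gradients of $h$ at the points; $\mathfrak N_{\mathrm g}(H;X)=\mathfrak n_{\mathrm g}(H;X)^\top\mathfrak n_{\mathrm g}(H;X)$ where $\mathfrak n_{\mathrm g}(H;X)$ has columns $\mathfrak n_{\mathrm g}(h_j;X)$. Gradient-normalized VCA on input $(Y,\epsilon)$: $F_0=\{m\}$ ($m$ a fixed nonzero constant), $G_0=\emptyset$; for $t=1,2,\ldots$: (S1) $C_1^{\mathrm{pre}}=\{x_1,\ldots,x_n\}$, $C_t^{\mathrm{pre}}=\{pq:p\in F_1,q\in F_{t-1}\}$ for $t>1$; $C_t=C_t^{\mathrm{pre}}-F^{t-1}F^{t-1}(Y)^\dagger C_t^{\mathrm{pre}}(Y)$, $F^{t-1}=F_0\cup\cdots\cup F_{t-1}$, $\dagger$ the pseudo-inverse. (S2) Solve $C_t(Y)^\top C_t(Y)V=\mathfrak N_{\mathrm g}(C_t;Y)V\Lambda$, $V$ with columns $\boldsymbol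 v_i$, $V^\top\mathfrak N_{\mathrm g}(C_t;Y)V=I$, $\Lambda=\mathrm{diag}(\lambda_i)$. (S3) $F_t=\{C_t\boldsymbol v_i:\sqrt{\lambda_i}>\epsilon\}$, $G_t=\{C_t\boldsymbol v_i:\sqrt{\lambda_i}\le\epsilon\}$; stop with $F=\bigcup F_t$, $G=\bigcup G_t$ if $F_t=\emptyset$, otherwise continue. $F^\tau=F_0\cup\cdots\cup F_\tau$, $G^\tau=G_0\cup\cdots\cup G_\tau$. $\widehat h$ is $(t,\alpha)$-degree-wise identical to $h$ if $\widehat h=\sum_{s=0}^{\deg(h)}\alpha^{t-s}h^{(s)}$, with $h^{(s)}$ the homogeneous degree-$s$ part of $h$. *)

From HB Require Import structures.
From mathcomp Require Import all_boot all_order all_algebra.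
From mathcomp Require Import mpoly.
Set Implicit Arguments. Unset Strict Implicit. Unset Printing Implicit Defensive.
Import Order.TTheory GRing.Theory Num.Theory.
Local Open Scope ring_scope.

Section VCA.
Variables (R : rcfType) (n : nat).
Notation poly := {mpoly R[n]}.
Notation point := 'rV[R]_n.

Definition evalp (h : poly) (x : point) : R := h.@[fun i => x ord0 i].

Definition scale_pts (a : R) (X : seq point) : seq point := [seq a *: x | x <- X].

Definition evmx (H : seq poly) (X : seq point) : 'M[R]_(size X, size H) :=
  \matrix_(i < size X, j < size H) evalp (nth 0 H j) (nth 0 X i).

Definition gradmx (h : poly) (X : seq point) : 'M[R]_(size X, n) :=
  \matrix_(i < size X, k < n) evalp (mderiv k h) (nth 0 X i).

(* vec (column-stacking vectorization) *)
Definition vecmx m k (A : 'M[R]_(m, k)) : 'cV[R]_(k * m) := (mxvec A^T)^T.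

Definition ngmx (H : seq poly) (X : seq point) : 'M[R]_(n * size X, size H) :=
  \matrix_(r < n * size X, j < size H) vecmx (gradmx (nth 0 H j) X) r ord0.

Definition Ngmx (H : seq poly) (X : seq point) : 'M[R]_(size H) :=
  (ngmx H X)^T *m ngmx H X.

Definition is_pinv m k (A : 'M[R]_(m, k)) (B : 'M[R]_(k, m)) : Prop :=
  [/\ A *m B *m A = A, B *m A *m B = B,
      (A *m B)^T = A *m B & (B *m A)^T = B *m A].

Definition lincomb (H : seq poly) (w : 'I_(size H) -> R) : poly :=
  \sum_(j < size H) w j *: nth 0 H j.

(* Fs = [:: F_0; ...; F_{t-1}] (so t = size Fs); Ft, Gt are the outputs. *)
Definition vca_step (Y : seq point) (eps : R) (Fs : seq (seq poly))
    (Ft Gt : seq poly) : Prop :=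
  let t := size Fs in
  let Cpre : seq poly :=
    if t == 1%N then [seq 'X_i | i <- enum 'I_n]
    else [seq p * q | p <- nth [::] Fs 1, q <- nth [::] Fs t.-1] in
  let Fall := flatten Fs in
  exists P : 'M[R]_(size Fall, size Y),
    is_pinv (evmx Fall Y) P /\
    let M := P *m evmx Cpre Y in
    let C : seq poly :=
      map (fun j : 'I_(size Cpre) => nth 0 Cpre j - @lincomb Fall (fun k : 'I_(size Fall) => M k j))
        (enum 'I_(size Cpre)) in
    exists (V : 'M[R]_(size C)) (lam : 'rV[R]_(size C)),
      (evmx C Y)^T *m evmx C Y *m V = Ngmx C Y *m V *m diag_mx lam /\
      V^T *m Ngmx C Y *m V = 1%:M /\
      Ft = [seq @lincomb C (fun j => V j i) | i <- enum 'I_(size C) & eps < Num.sqrt (lam ord0 i)] /\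
      Gt = [seq @lincomb C (fun j => V j i) | i <- enum 'I_(size C) & Num.sqrt (lam ord0 i) <= eps].

Definition vca_run (m : R) (Y : seq point) (eps : R) (F G : nat -> seq poly)
    (tau : nat) : Prop :=
  F 0%N = [:: m%:MP] /\ G 0%N = [::] /\
  forall t, (1 <= t <= tau)%N -> vca_step Y eps [seq F k | k <- iota 0 t] (F t) (G t).

Definition hpart (h : poly) (s : nat) : poly := pihomog mdeg s h.

(* hh is (t,alpha)-degree-wise identical to h:
   hh = sum_{s=0}^{deg h} alpha^(t-s) h^(s)   (deg h = msize h - 1) *)
Definition dwi (t : nat) (a : R) (h hh : poly) : bool :=
  hh == \sum_(s < msize h) (a ^ (t%:Z - s%:Z)) *: hpart h s.

Definition matched (a : R) (A B : seq poly) : Prop :=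
  exists2 s : seq poly, perm_eq s B &
    all2 (fun h hh => (msize h <= 1)%N || dwi 1 a h hh) A s.

End VCA.
Arguments lincomb {R n} H w.

From HB Require Import structures.
From mathcomp Require Import all_boot all_order all_algebra.
From mathcomp Require Import mpoly.
From mathcomp Require Import ring.
Set Implicit Arguments. Unset Strict Implicit. Unset Printing Implicit Defensive.
Import Order.TTheory GRing.Theory Num.Theory.
Local Open Scope ring_scope.

(* Write [rescale k h] for x |-> a^k h(x / a).  It takes at aX the values
   of a^k h at X, its partial derivatives are the [rescale (k - 1)] of those of
   h, and [rescale 1 h] is the degree-wise identical copy of h.  So the products
   F_1 F_tau, hence the candidates C^pre, of the run on aX are the [rescale 2]
   of those on X.  Since F^tau is orthogonal for the sample inner product, every
   pseudo-inverse in (S1) realizes the orthogonal projection onto it, which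
   commutes with [rescale 2]: up to order, C on aX is [rescale 2] of C on X.
   For it the evaluation Gram matrix is a^4 times, and the gradient Gram matrix
   a^2 times, that of C on X, so a^-1 V with eigenvalues a^2 lambda solves (S2);
   the singular values are multiplied by |a| just like the threshold, and the
   outputs a^-1 [rescale 2] (C v) = [rescale 1] (C v) are the degree-wise
   identical copies of the old ones. *)

Section Rescale.
Variables (R : fieldType) (n : nat) (a : R).
Hypothesis a_neq0 : a != 0.
Implicit Types (p q h : {mpoly R[n]}) (m : 'X_{1..n}).

Definition unscaleX : n.-tuple {mpoly R[n]} := [tuple a^-1 *: 'X_i | i < n].

Definition rescale k h : {mpoly R[n]} := a ^+ k *: (h \mPo unscaleX).

Lemma rescale_is_linear k : linear (rescale k).
Proof.
by move=> c p q; rewrite /rescale linearP /= scalerDr !scalerA mulrC.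
Qed.

HB.instance Definition _ k :=
  GRing.isLinear.Build R {mpoly R[n]} {mpoly R[n]} _ (rescale k)
    (rescale_is_linear k).

Lemma comp_unscaleX_monom m : 'X_[m] \mPo unscaleX = a^-1 ^+ mdeg m *: 'X_[m].
Proof.
rewrite comp_mpolyX [in RHS]mpolyXE_id mdegE -prodrXr -scaler_prod.
by apply: eq_bigr => i _; rewrite tnth_mktuple exprZn.
Qed.

Lemma rescaleC k c : rescale k c%:MP = (a ^+ k * c)%:MP.
Proof. by rewrite /rescale comp_mpolyC -mul_mpolyC -mpolyCM. Qed.

Lemma rescaleS k p : rescale k.+1 p = a *: rescale k p.
Proof. by rewrite /rescale scalerA -exprS. Qed.

Lemma rescaleM i j p q : rescale i p * rescale j q = rescale (i + j) (p * q).
Proof.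
by rewrite /rescale rmorphM /= -scalerAl -scalerAr scalerA -exprD.
Qed.

Lemma meval_rescale k h (v : 'I_n -> R) :
  (rescale k h).@[fun i => a * v i] = a ^+ k * h.@[v].
Proof.
rewrite mevalZ comp_mpoly_meval; congr (_ * _); apply: meval_eq => i.
by rewrite tnth_mktuple mevalZ mevalXU mulKf.
Qed.

Lemma mderiv_comp_unscaleX i h :
  mderiv i (h \mPo unscaleX) = a^-1 *: (mderiv i h \mPo unscaleX).
Proof.
elim/mpolyind: h => [|c m p _ _ IH]; first by rewrite !linear0.
rewrite !linearP /= {}IH; congr (_ + _).
rewrite linearZ /= [X in mderiv _ X]comp_unscaleX_monom !mderivZ !mderivX.
rewrite !linearZ /= comp_unscaleX_monom !scalerA; f_equal.
have [->|mi_gt0] := posnP (m i); first by rewrite !(mulr0, mul0r).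
have le_Um : (U_(i) <= m)%MM.
  by apply/mnm_lepP => j; rewrite mnm1E; case: eqP => [<-|].
by rewrite -{1}(submK le_Um) mdegD mdeg1 addn1 exprS; ring.
Qed.

Lemma mderiv_rescale i k h : mderiv i (rescale k.+1 h) = rescale k (mderiv i h).
Proof.
by rewrite /rescale linearZ /= mderiv_comp_unscaleX scalerA exprS mulrC mulKf.
Qed.

Lemma rescale1_homog h :
  rescale 1 h = \sum_(s < msize h) a ^ (1 - s%:Z) *: pihomog mdeg s h.
Proof.
under eq_bigr => s _ do rewrite pihomogE scaler_sumr.
rewrite (exchange_big_dep xpredT) //= /rescale comp_mpolyEX scaler_sumr.
apply: eq_big_seq => m mh; rewrite comp_unscaleX_monom.
rewrite (bigD1 (Ordinal (msize_mdeg_lt mh))) //= big1 ?addr0; last first.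
  by move=> j /andP [/eqP e]; rewrite -val_eqE /= -e eqxx.
rewrite !scalerA; congr (_ *: _).
by rewrite expfzDr // expr1z -exprnN -exprVn expr1; ring.
Qed.

End Rescale.

Section OrthogonalColumns.
Variables (R : rcfType) (N K : nat) (A : 'M[R]_(N, K)).

Lemma gram_diag_eq0 k : (A^T *m A) k k = 0 -> forall i, A i k = 0.
Proof.
rewrite mxE => /psumr_eq0P A0 i.
have /eqP : A^T k i * A i k = 0 by apply: A0 => // j _; rewrite mxE -expr2 sqr_ge0.
by rewrite mxE mulf_eq0 orbb => /eqP.
Qed.

Hypothesis A_orth : forall k l : 'I_K, k != l -> (A^T *m A) k l = 0.

(* A zero column of [A] gives a zero row, as [x / 0 = 0]. *)
Definition orth_pinvmx : 'M[R]_(K, N) :=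
  \matrix_(k, i) (A i k / (A^T *m A) k k).

Lemma orth_pinvmx_mulmx :
  orth_pinvmx *m A = diag_mx (\row_k ((A^T *m A) k k / (A^T *m A) k k)).
Proof.
apply/matrixP => k l; rewrite [LHS]mxE [RHS]mxE mxE.
have -> : \sum_j orth_pinvmx k j * A j l = (A^T *m A) k l / (A^T *m A) k k.
  rewrite [(A^T *m A) k l]mxE mulr_suml; apply: eq_bigr => j _.
  by rewrite !mxE mulrAC.
by have [<-|kl] := eqVneq k l; rewrite ?mulr1n // A_orth // mul0r mulr0n.
Qed.

Lemma orth_pinvmxP : is_pinv A orth_pinvmx.
Proof.
split.
- rewrite -mulmxA orth_pinvmx_mulmx mul_mx_diag; apply/matrixP => i k.
  rewrite mxE [_ 0 k]mxE; have [d0|d_neq0] := eqVneq ((A^T *m A) k k) 0.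
    by rewrite (gram_diag_eq0 d0) mul0r.
  by rewrite divff ?mulr1.
- rewrite orth_pinvmx_mulmx mul_diag_mx; apply/matrixP => k i.
  rewrite mxE [_ 0 k]mxE [orth_pinvmx k i]mxE.
  have [d0|d_neq0] := eqVneq ((A^T *m A) k k) 0; first by rewrite d0 invr0 !mulr0.
  by rewrite divff ?mul1r.
- apply/matrixP => i j; rewrite !mxE; apply: eq_bigr => k _; rewrite !mxE.
  by rewrite mulrCA mulrA.
- by rewrite orth_pinvmx_mulmx tr_diag_mx.
Qed.

Lemma pinv_orth_cols P : is_pinv A P -> P = orth_pinvmx.
Proof.
case=> APA PAP AP_sym PA_sym; apply/matrixP => k i; rewrite mxE.
have [d0|dk_neq0] := eqVneq ((A^T *m A) k k) 0.
  have PA0 l : (P *m A) k l = 0.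
    by rewrite -PA_sym !mxE big1 // => j _; rewrite (gram_diag_eq0 d0) mulr0.
  by rewrite d0 invr0 mulr0 -PAP mxE big1 // => l _; rewrite PA0 mul0r.
have AAP : A^T *m A *m P = A^T by rewrite -mulmxA -AP_sym -trmx_mul APA.
have := congr1 (fun M : 'M_(K, N) => M k i) AAP; rewrite mxE (bigD1 k) //=.
rewrite big1 => [|l lk]; last by rewrite A_orth ?mul0r // eq_sym.
by rewrite addr0 [A^T k i]mxE => <-; rewrite mulrC mulKf.
Qed.

End OrthogonalColumns.

Section ReindexMatrix.
Variables (R : pzRingType) (m m' : nat) (f : 'I_m' -> 'I_m).
Hypothesis f_bij : bijective f.

Definition reindex_mx (M : 'M[R]_m) : 'M[R]_m' := \matrix_(k, l) M (f k) (f l).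

Lemma reindex_mxM M N : reindex_mx (M *m N) = reindex_mx M *m reindex_mx N.
Proof.
apply/matrixP => k l; rewrite !mxE (reindex f) /=; last exact: onW_bij.
by apply: eq_bigr => j _; rewrite !mxE.
Qed.

Lemma reindex_mxT M : reindex_mx M^T = (reindex_mx M)^T.
Proof. by apply/matrixP => k l; rewrite !mxE. Qed.

Lemma reindex_mx1 : reindex_mx 1%:M = 1%:M.
Proof. by apply/matrixP => k l; rewrite !mxE (bij_eq f_bij). Qed.

Lemma reindex_diag_mx d : reindex_mx (diag_mx d) = diag_mx (\row_k d 0 (f k)).
Proof. by apply/matrixP => k l; rewrite !mxE (bij_eq f_bij). Qed.

End ReindexMatrix.

Lemma gen_eigen_diag (R : pzRingType) k (A B V D : 'M[R]_k) :
  A *m V = B *m V *m D -> V^T *m B *m V = 1%:M -> V^T *m A *m V = D.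
Proof. by move=> AV VBV; rewrite -mulmxA AV !mulmxA VBV mul1mx. Qed.

Lemma gen_eigen_reindex (K : fieldType) k k' (f : 'I_k' -> 'I_k) (s : K)
    (A B V : 'M[K]_k) (d : 'rV[K]_k) :
  bijective f -> s != 0 ->
  A *m V = B *m V *m diag_mx d -> V^T *m B *m V = 1%:M ->
  let V' := s^-1 *: reindex_mx f V in
  let B' := s ^+ 2 *: reindex_mx f B in
  (s ^+ 4 *: reindex_mx f A) *m V' =
    B' *m V' *m diag_mx (\row_i (s ^+ 2 * d 0 (f i))) /\
  V'^T *m B' *m V' = 1%:M.
Proof.
move=> f_bij s_neq0 eig norm V' B'.
have D' :
    diag_mx (\row_i (s ^+ 2 * d 0 (f i))) = s ^+ 2 *: reindex_mx f (diag_mx d).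
  by rewrite reindex_diag_mx //; apply/matrixP => i j; rewrite !mxE mulrnAr.
rewrite /V' /B' D'; split.
  rewrite -!(scalemxAl, scalemxAr) !scalerA -!reindex_mxM // eig.
  by congr (_ *: _); field.
rewrite [(_ *: _)^T]linearZ /= -reindex_mxT -!(scalemxAl, scalemxAr) !scalerA.
rewrite -!reindex_mxM //.
by rewrite norm reindex_mx1 // -[RHS]scale1r; congr (_ *: _); field.
Qed.

Lemma perm_eq_map_nth_bij (S T : eqType) (x0 : S) (y0 : T) (g : S -> T) s t :
  perm_eq t (map g s) ->
  exists2 f : 'I_(size t) -> 'I_(size s),
    bijective f & forall k : 'I_(size t), nth y0 t k = g (nth x0 s (f k)).
Proof.
case/(perm_iotaP y0) => Is; rewrite size_map => Is_iota t_def.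
have size_Is : size Is = size t by rewrite t_def size_map.
have Is_lt (k : 'I_(size t)) : (nth 0 Is k < size s)%N.
  have: nth 0 Is k \in iota 0 (size s) by rewrite -(perm_mem Is_iota) mem_nth ?size_Is.
  by rewrite mem_iota.
have index_lt (j : 'I_(size s)) : (index (val j) Is < size t)%N.
  by rewrite -size_Is index_mem (perm_mem Is_iota) mem_iota /=.
have uniq_Is : uniq Is by rewrite (perm_uniq Is_iota) iota_uniq.
exists (fun k => Ordinal (Is_lt k)).
  exists (fun j => Ordinal (index_lt j)) => [k|j]; apply: val_inj => /=.
    by rewrite index_uniq // size_Is.
  by rewrite nth_index // (perm_mem Is_iota) mem_iota /=.
have nth_t i : (i < size Is)%N -> nth y0 t i = nth y0 (map g s) (nth 0 Is i).
  by move=> i_lt; rewrite t_def (nth_map 0%N).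
by move=> k; rewrite nth_t ?size_Is //= (nth_map x0).
Qed.

Lemma perm_filter_bij (T T' : finType) (U : eqType) (f : T' -> T) (P : pred T)
    (g : T -> U) :
  bijective f ->
  perm_eq [seq g (f i) | i <- enum T' & P (f i)] [seq g j | j <- enum T & P j].
Proof.
move=> f_bij; rewrite (map_comp g f) -filter_map; apply/perm_map/perm_filter.
apply: uniq_perm; rewrite ?(map_inj_uniq (bij_inj f_bij)) ?enum_uniq //.
by move=> j; rewrite mem_enum; case: f_bij => f' _ f'K; rewrite -[j]f'K map_f ?mem_enum.
Qed.

Lemma perm_flatten_map (I T : eqType) (s : seq I) (F G : I -> seq T) :
  {in s, forall i, perm_eq (F i) (G i)} ->
  perm_eq (flatten (map F s)) (flatten (map G s)).
Proof.
elim: s => //= i s IH FG; rewrite perm_cat ?FG ?mem_head ?IH //.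
by move=> j j_in; apply: FG; rewrite inE j_in orbT.
Qed.

Section SampleInnerProduct.
Variables (R : rcfType) (n : nat).
Implicit Types (f g c : {mpoly R[n]}) (Y : seq 'rV[R]_n) (L H : seq {mpoly R[n]}).

Definition evdot Y f g : R := \sum_(y <- Y) evalp f y * evalp g y.
Definition evorth Y : rel {mpoly R[n]} := fun f g => evdot Y f g == 0.
Definition evcoef Y f c : R := evdot Y f c / evdot Y f f.
Definition evproj Y L c : {mpoly R[n]} := \sum_(f <- L) evcoef Y f c *: f.

Lemma evdotC Y f g : evdot Y f g = evdot Y g f.
Proof. by apply: eq_bigr => y _; rewrite mulrC. Qed.

Lemma evdotBr Y f g1 g2 : evdot Y f (g1 - g2) = evdot Y f g1 - evdot Y f g2.
Proof. by rewrite -sumrB; apply: eq_bigr => y _; rewrite /evalp mevalB mulrBr. Qed.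

Lemma evdotZr Y f k g : evdot Y f (k *: g) = k * evdot Y f g.
Proof. by rewrite mulr_sumr; apply: eq_bigr => y _; rewrite /evalp mevalZ mulrCA. Qed.

Lemma evdotZl Y k f g : evdot Y (k *: f) g = k * evdot Y f g.
Proof. by rewrite evdotC evdotZr evdotC. Qed.

Lemma evdot_sumr Y f I (r : seq I) (G : I -> {mpoly R[n]}) :
  evdot Y f (\sum_(i <- r) G i) = \sum_(i <- r) evdot Y f (G i).
Proof.
rewrite /evdot exchange_big; apply: eq_bigr => y _.
by rewrite /evalp raddf_sum mulr_sumr.
Qed.

Lemma evdot_polyC Y (k1 k2 : R) : evdot Y k1%:MP k2%:MP = (k1 * k2) *+ size Y.
Proof.
elim: Y => [|y Y IH]; first by rewrite /evdot big_nil.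
by rewrite /evdot big_cons -/(evdot _ _ _) IH /evalp !mevalC mulrS.
Qed.

Lemma evdotxx_eq0 Y f g : evdot Y f f = 0 -> evdot Y f g = 0.
Proof.
move/eqP; rewrite psumr_eq0 => [/allP f0|y _]; last by rewrite -expr2 sqr_ge0.
rewrite /evdot big_seq big1 // => y /f0; rewrite -expr2 sqrf_eq0 => /eqP ->.
by rewrite mul0r.
Qed.

Lemma evmx_gram H Y (k l : 'I_(size H)) :
  ((evmx H Y)^T *m evmx H Y) k l = evdot Y (nth 0 H k) (nth 0 H l).
Proof.
rewrite mxE /evdot (big_nth 0) big_mkord; apply: eq_bigr => i _.
by rewrite !mxE.
Qed.

Lemma evalp_lincomb H w y :
  evalp (lincomb H w) y = \sum_j w j * evalp (nth 0 H j) y.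
Proof. by rewrite /evalp /lincomb raddf_sum; apply: eq_bigr => j _; exact: mevalZ. Qed.

Lemma evdot_lincomb Y H (V : 'M[R]_(size H)) i j :
  evdot Y (lincomb H (fun k => V k i)) (lincomb H (fun k => V k j)) =
  (V^T *m ((evmx H Y)^T *m evmx H Y) *m V) i j.
Proof.
rewrite mulmxA -trmx_mul -mulmxA mxE /evdot (big_nth 0) big_mkord.
apply: eq_bigr => r _; rewrite !mxE !evalp_lincomb.
by congr (_ * _); apply: eq_bigr => k _; rewrite !mxE mulrC.
Qed.

Lemma evdot_lincombr Y g H w :
  evdot Y g (lincomb H w) = \sum_j w j * evdot Y g (nth 0 H j).
Proof. by rewrite evdot_sumr; apply: eq_bigr => j _; rewrite evdotZr. Qed.

Lemma evorth_nth Y L k l : pairwise (evorth Y) L ->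
  (k < size L)%N -> (l < size L)%N -> k != l ->
  evdot Y (nth 0 L k) (nth 0 L l) = 0.
Proof.
move=> /(pairwiseP 0) L_orth k_lt l_lt; rewrite neq_ltn => /orP [kl|lk].
  exact/eqP/L_orth.
by rewrite evdotC; apply/eqP/L_orth.
Qed.

Lemma gram_evorth Y L : pairwise (evorth Y) L ->
  forall k l : 'I_(size L), k != l -> ((evmx L Y)^T *m evmx L Y) k l = 0.
Proof. by move=> L_orth k l kl; rewrite evmx_gram evorth_nth. Qed.

Lemma evproj_nth Y L c :
  evproj Y L c = \sum_(k < size L) evcoef Y (nth 0 L k) c *: nth 0 L k.
Proof. by rewrite /evproj (big_nth 0) big_mkord. Qed.

Lemma evproj_orth Y L c g : pairwise (evorth Y) L -> g \in L ->
  evdot Y g (c - evproj Y L c) = 0.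
Proof.
move=> L_orth /(nthP 0) [k k_lt <-].
rewrite evdotBr evproj_nth evdot_sumr (bigD1 (Ordinal k_lt)) //= big1 ?addr0.
  rewrite evdotZr /evcoef.
  have [g0|g_neq0] := eqVneq (evdot Y (nth 0 L k) (nth 0 L k)) 0.
    by rewrite (evdotxx_eq0 c g0) !mul0r subrr.
  by rewrite (divfK g_neq0) subrr.
move=> l; rewrite -val_eqE /= eq_sym => lk.
by rewrite evdotZr evorth_nth ?mulr0.
Qed.

Lemma evcoef_scale Y (k : R) f c :
  k != 0 -> evcoef Y (k *: f) c *: (k *: f) = evcoef Y f c *: f.
Proof.
move=> k_neq0; rewrite /evcoef !evdotZl !evdotZr scalerA.
have [f0|f_neq0] := eqVneq (evdot Y f f) 0; first by rewrite f0 !(mulr0, invr0, mul0r).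
by f_equal; field; rewrite k_neq0 f_neq0.
Qed.

Definition evgdot Y f g : R := \sum_(i < n) evdot Y (mderiv i f) (mderiv i g).

Lemma Ngmx_evgdot H Y (k l : 'I_(size H)) :
  Ngmx H Y k l = evgdot Y (nth 0 H k) (nth 0 H l).
Proof.
rewrite /Ngmx mxE (reindex _ (curry_mxvec_bij _ _)) /= /evgdot.
under [RHS]eq_bigr => i _ do rewrite /evdot (big_nth 0) big_mkord.
rewrite pair_big /=; apply: eq_bigr => -[i y] _ /=.
by rewrite !mxE /vecmx !mxvecE !mxE.
Qed.

End SampleInnerProduct.

Section VCAStep.
Variables (R : rcfType) (n : nat).
Implicit Types (Y : seq 'rV[R]_n) (eps : R) (Fs : seq (seq {mpoly R[n]}))
  (C Ft Gt : seq {mpoly R[n]}).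

(* [vca_Cpre Fs] and [vca_C P] are the let-bound C_t^pre and C_t of
   [vca_step], and [vca_eigsplit] is its part (S2)-(S3). *)
Definition vca_Cpre Fs : seq {mpoly R[n]} :=
  if size Fs == 1%N then [seq 'X_i | i <- enum 'I_n]
  else [seq p * q | p <- nth [::] Fs 1, q <- nth [::] Fs (size Fs).-1].

Definition vca_C Y Fs (P : 'M[R]_(size (flatten Fs), size Y)) : seq {mpoly R[n]} :=
  [seq nth 0 (vca_Cpre Fs) j -
       lincomb (flatten Fs) (fun k => (P *m evmx (vca_Cpre Fs) Y) k j)
  | j : 'I_(size (vca_Cpre Fs)) <- enum 'I_(size (vca_Cpre Fs))].

Definition vca_eigsplit Y eps C Ft Gt : Prop :=
  exists (V : 'M[R]_(size C)) (lam : 'rV[R]_(size C)),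
    (evmx C Y)^T *m evmx C Y *m V = Ngmx C Y *m V *m diag_mx lam /\
    V^T *m Ngmx C Y *m V = 1%:M /\
    Ft = [seq lincomb C (fun j => V j i) |
           i <- enum 'I_(size C) & eps < Num.sqrt (lam ord0 i)] /\
    Gt = [seq lincomb C (fun j => V j i) |
           i <- enum 'I_(size C) & Num.sqrt (lam ord0 i) <= eps].

Lemma vca_stepE Y eps Fs Ft Gt :
  vca_step Y eps Fs Ft Gt <->
  exists P, is_pinv (evmx (flatten Fs) Y) P /\ vca_eigsplit Y eps (vca_C P) Ft Gt.
Proof. by []. Qed.

Lemma vca_C_evproj Y Fs P :
  is_pinv (evmx (flatten Fs) Y) P -> pairwise (evorth Y) (flatten Fs) ->
  vca_C P = [seq c - evproj Y (flatten Fs) c | c <- vca_Cpre Fs].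
Proof.
move=> P_pinv L_orth; rewrite (pinv_orth_cols (gram_evorth L_orth) P_pinv).
rewrite -[in RHS](mkseq_nth 0 (vca_Cpre Fs)) /mkseq -val_enum_ord.
rewrite -map_comp -[in RHS]map_comp /vca_C; apply: eq_map => j /=.
congr (_ - _); rewrite evproj_nth; apply: eq_bigr => k _; congr (_ *: _).
rewrite mxE /evcoef -evmx_gram mulr_suml /evdot (big_nth 0) big_mkord.
by apply: eq_bigr => i _; rewrite !mxE mulrAC.
Qed.

Lemma vca_Cpre_prod (F : nat -> seq {mpoly R[n]}) t : (1 <= t)%N ->
  vca_Cpre [seq F k | k <- iota 0 t.+1] = [seq p * q | p <- F 1%N, q <- F t].
Proof.
case: t => // t _; rewrite /vca_Cpre size_map size_iota.
by rewrite !(nth_map 0%N) ?size_iota // !nth_iota.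
Qed.

Section EigSplit.
Variables (Y : seq 'rV[R]_n) (eps : R) (C Ft Gt : seq {mpoly R[n]}).
Hypothesis eigsplit : vca_eigsplit Y eps C Ft Gt.

Lemma vca_eigsplit_norm_gt0 : 0 <= eps -> {in Ft, forall f, 0 < evdot Y f f}.
Proof.
case: eigsplit => V [lam [eig [norm [-> _]]]] eps_ge0 f /mapP [i].
rewrite mem_filter => /andP [lam_gt _] ->.
rewrite evdot_lincomb (gen_eigen_diag eig norm) mxE eqxx mulr1n.
by rewrite -sqrtr_gt0 (le_lt_trans eps_ge0).
Qed.

Lemma vca_eigsplit_pairwise : pairwise (evorth Y) Ft.
Proof.
case: eigsplit => V [lam [eig [norm [-> _]]]]; rewrite pairwise_map.
apply/pairwise_filter/(sub_pairwise (r := [rel i j | i != j])).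
  move=> i j /= ij; rewrite /evorth evdot_lincomb (gen_eigen_diag eig norm).
  by rewrite mxE (negbTE ij) mulr0n.
by rewrite -uniq_pairwise enum_uniq.
Qed.

Lemma vca_eigsplit_orth g :
  {in C, forall c, evdot Y g c = 0} -> {in Ft, forall f, evdot Y g f = 0}.
Proof.
case: eigsplit => V [lam [_ [_ [-> _]]]] gC f /mapP [i _ ->].
by rewrite evdot_lincombr big1 // => j _; rewrite gC ?mulr0 ?mem_nth.
Qed.

End EigSplit.

Section Run.
Variables (m : R) (Y : seq 'rV[R]_n) (eps : R) (F G : nat -> seq {mpoly R[n]})
  (tau : nat).
Hypothesis run : vca_run m Y eps F G tau.

Lemma vca_run_pairwise t : (t <= tau)%N ->
  pairwise (evorth Y) (flatten [seq F k | k <- iota 0 t.+1]).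
Proof.
have [F0 [_ step]] := run.
elim: t => [|t IH] t_lt; first by rewrite /= F0.
have /vca_stepE [P [P_pinv eigsplit]] := step t.+1 t_lt.
rewrite (vca_C_evproj P_pinv (IH (ltnW t_lt))) in eigsplit.
have -> : flatten [seq F k | k <- iota 0 t.+2] =
    flatten [seq F k | k <- iota 0 t.+1] ++ F t.+1.
  by rewrite -addn1 iotaD map_cat flatten_cat /= cats0.
rewrite pairwise_cat IH ?(ltnW t_lt) // (vca_eigsplit_pairwise eigsplit) !andbT.
apply/allrelP => g f g_in f_in; apply/eqP/(vca_eigsplit_orth eigsplit _ f_in).
move=> _ /mapP [c _ ->].
exact: evproj_orth (IH (ltnW t_lt)) g_in.
Qed.

Lemma vca_run_norm_gt0 t : 0 <= eps -> (1 <= t <= tau)%N ->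
  {in F t, forall f, 0 < evdot Y f f}.
Proof.
move=> eps_ge0 t_range; have [_ [_ step]] := run.
by have /vca_stepE [P [_ /vca_eigsplit_norm_gt0]] := step t t_range; apply.
Qed.

Lemma vca_run_nonconst t : 0 <= eps -> m != 0 -> (1 <= t <= tau)%N ->
  {in F t, forall f, (1 < msize f)%N}.
Proof.
move=> eps_ge0 m_neq0 t_range f f_in; have /andP [t_gt0 t_le] := t_range.
have [F0 _] := run; have := vca_run_pairwise t_le; rewrite /= F0 /=.
case/andP => /allP /(_ f) m_orth _.
have {}m_orth : evdot Y m%:MP f = 0.
  apply/eqP/m_orth/flatten_mapP; exists t => //.
  by rewrite mem_iota t_gt0 add1n ltnSn.
(* A constant of positive norm is not orthogonal to the constant [m]. *)
rewrite ltnNge; apply/negP => /msize1_polyC f_const.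
have := vca_run_norm_gt0 eps_ge0 t_range f_in; move: m_orth.
rewrite f_const !evdot_polyC -!mulrnAr => /eqP; rewrite mulf_eq0 (negbTE m_neq0) /=.
by move=> /eqP ->; rewrite mulr0 ltxx.
Qed.

End Run.
End VCAStep.

Section ScaledRun.
Variables (R : rcfType) (n : nat) (a : R).
Hypothesis a_neq0 : a != 0.
Implicit Types (X : seq 'rV[R]_n) (f g c h : {mpoly R[n]})
  (A B : seq {mpoly R[n]}).

Lemma evalp_rescale k h x : evalp (rescale a k h) (a *: x) = a ^+ k * evalp h x.
Proof.
rewrite /evalp -(meval_rescale a_neq0); apply: meval_eq => i; exact: mxE.
Qed.

Lemma evdot_rescale X i j f g :
  evdot (scale_pts a X) (rescale a i f) (rescale a j g) =
  a ^+ (i + j) * evdot X f g.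
Proof.
rewrite /evdot big_map mulr_sumr; apply: eq_bigr => x _.
by rewrite !evalp_rescale exprD; ring.
Qed.

Lemma evgdot_rescale X i j f g :
  evgdot (scale_pts a X) (rescale a i.+1 f) (rescale a j.+1 g) =
  a ^+ (i + j) * evgdot X f g.
Proof.
rewrite /evgdot mulr_sumr; apply: eq_bigr => k _.
by rewrite !mderiv_rescale // evdot_rescale.
Qed.

Lemma evcoef_rescale X f c :
  evcoef (scale_pts a X) (rescale a 1 f) (rescale a 2 c) *: rescale a 1 f =
  rescale a 2 (evcoef X f c *: f).
Proof.
rewrite /evcoef !evdot_rescale [RHS]linearZ /= (rescaleS a 1) [RHS]scalerA.
have [f0|f_neq0] := eqVneq (evdot X f f) 0; first by rewrite f0 !(mulr0, invr0, mul0r).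
by f_equal; field; rewrite a_neq0 f_neq0.
Qed.

Lemma evproj_rescale X L Lh (k : {mpoly R[n]} -> R) c :
  (forall f, k f != 0) -> perm_eq Lh [seq k f *: rescale a 1 f | f <- L] ->
  evproj (scale_pts a X) Lh (rescale a 2 c) = rescale a 2 (evproj X L c).
Proof.
move=> k_neq0 Lh_perm; rewrite /evproj (perm_big _ Lh_perm) big_map linear_sum.
by apply: eq_bigr => f _; rewrite evcoef_scale // evcoef_rescale.
Qed.

Lemma dwi1E h hh : dwi 1 a h hh = (hh == rescale a 1 h).
Proof. by rewrite /dwi (rescale1_homog a_neq0). Qed.

Lemma matched_rescale A B : perm_eq (map (rescale a 1) A) B -> matched a A B.
Proof.
move=> AB; exists (map (rescale a 1) A) => //; elim: A {AB} => //= h A ->.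
by rewrite dwi1E eqxx orbT.
Qed.

Lemma matched_nonconstE A B :
  {in A, forall f, (1 < msize f)%N} -> matched a A B ->
  perm_eq B (map (rescale a 1) A).
Proof.
move=> A_nc [s s_B A_s]; rewrite perm_sym.
suff <- : s = map (rescale a 1) A by [].
elim: A s {s_B} A_nc A_s => [|h A IH] [|hh s] //= A_nc /andP [h_hh A_s].
move: h_hh; rewrite leqNgt A_nc ?mem_head //= dwi1E => /eqP ->.
by rewrite (IH s) // => f f_in; apply: A_nc; rewrite inE f_in orbT.
Qed.

Section Reindexed.
Variables (C C' : seq {mpoly R[n]}) (f : 'I_(size C') -> 'I_(size C)).
Hypothesis f_bij : bijective f.
Hypothesis C'E :
  forall k : 'I_(size C'), nth 0 C' k = rescale a 2 (nth 0 C (f k)).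

Lemma gram_rescale X :
  (evmx C' (scale_pts a X))^T *m evmx C' (scale_pts a X) =
  a ^+ 4 *: reindex_mx f ((evmx C X)^T *m evmx C X).
Proof.
apply/matrixP => k l.
by rewrite evmx_gram mxE [reindex_mx _ _ _ _]mxE evmx_gram !C'E evdot_rescale.
Qed.

Lemma Ngmx_rescale X :
  Ngmx C' (scale_pts a X) = a ^+ 2 *: reindex_mx f (Ngmx C X).
Proof.
apply/matrixP => k l.
rewrite Ngmx_evgdot mxE [reindex_mx _ _ _ _]mxE Ngmx_evgdot !C'E.
exact: (evgdot_rescale _ 1 1).
Qed.

Lemma lincomb_rescale (V : 'M[R]_(size C)) i :
  lincomb C' (fun j => (a^-1 *: reindex_mx f V) j i) =
  rescale a 1 (lincomb C (fun j => V j (f i))).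
Proof.
rewrite /lincomb linear_sum [RHS](reindex f) /=; last exact: onW_bij.
apply: eq_bigr => j _; rewrite C'E !mxE (rescaleS a 1) linearZ /= scalerA.
by rewrite mulVKf // [RHS]linearZ.
Qed.

Lemma vca_eigsplit_rescale X eps Ft Gt :
  vca_eigsplit X eps C Ft Gt ->
  exists Fn Gn, vca_eigsplit (scale_pts a X) (`|a| * eps) C' Fn Gn /\
    perm_eq (map (rescale a 1) Ft) Fn /\ perm_eq (map (rescale a 1) Gt) Gn.
Proof.
move=> [V [lam [eig [norm [-> ->]]]]].
have [eig' norm'] := gen_eigen_reindex f_bij a_neq0 eig norm.
set lam' := \row_i (a ^+ 2 * lam 0 (f i)) in eig'.
have sqrt_lam' i : Num.sqrt (lam' 0 i) = `|a| * Num.sqrt (lam 0 (f i)).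
  by rewrite mxE sqrtrM ?sqr_ge0 // sqrtr_sqr.
have split_perm (P : R -> R -> bool) :
    (forall x y, P (`|a| * x) (`|a| * y) = P x y) ->
    perm_eq (map (rescale a 1)
               [seq lincomb C (fun j => V j i) | i <- enum 'I_(size C) &
                 P eps (Num.sqrt (lam 0 i))])
      [seq lincomb C' (fun j => (a^-1 *: reindex_mx f V) j i) |
         i <- enum 'I_(size C') & P (`|a| * eps) (Num.sqrt (lam' 0 i))].
  move=> P_scale; rewrite perm_sym (eq_map (@lincomb_rescale V)).
  under eq_filter => i do rewrite sqrt_lam' P_scale.
  by rewrite -map_comp; exact: perm_filter_bij f_bij.
have a_gt0 : 0 < `|a| by rewrite normr_gt0.
exists [seq lincomb C' (fun j => (a^-1 *: reindex_mx f V) j i) |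
           i <- enum 'I_(size C') & `|a| * eps < Num.sqrt (lam' 0 i)],
       [seq lincomb C' (fun j => (a^-1 *: reindex_mx f V) j i) |
           i <- enum 'I_(size C') & Num.sqrt (lam' 0 i) <= `|a| * eps].
split; [|split].
- exists (a^-1 *: reindex_mx f V), lam'.
  by rewrite gram_rescale Ngmx_rescale.
- by apply: (split_perm (fun x y => x < y)) => x y; rewrite ltr_pM2l.
- by apply: (split_perm (fun x y => y <= x)) => x y; rewrite ler_pM2l.
Qed.

End Reindexed.

Lemma vca_step_rescale X eps Fs Fsh Ft Gt (k : {mpoly R[n]} -> R) :
  (forall f, k f != 0) ->
  pairwise (evorth X) (flatten Fs) ->
  pairwise (evorth (scale_pts a X)) (flatten Fsh) ->
  perm_eq (flatten Fsh) [seq k f *: rescale a 1 f | f <- flatten Fs] ->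
  perm_eq (vca_Cpre Fsh) (map (rescale a 2) (vca_Cpre Fs)) ->
  vca_step X eps Fs Ft Gt ->
  exists Fn Gn, vca_step (scale_pts a X) (`|a| * eps) Fsh Fn Gn /\
    perm_eq (map (rescale a 1) Ft) Fn /\ perm_eq (map (rescale a 1) Gt) Gn.
Proof.
move=> k_neq0 L_orth Lh_orth L_perm Cpre_perm /vca_stepE [P [P_pinv eigsplit]].
rewrite (vca_C_evproj P_pinv L_orth) in eigsplit.
have Lh_pinv := orth_pinvmxP (gram_evorth Lh_orth).
have C_perm : perm_eq (vca_C (orth_pinvmx (evmx (flatten Fsh) (scale_pts a X))))
    (map (rescale a 2) [seq c - evproj X (flatten Fs) c | c <- vca_Cpre Fs]).
  rewrite (vca_C_evproj Lh_pinv Lh_orth).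
  apply: perm_trans (perm_map _ Cpre_perm) _; rewrite -!map_comp.
  by under eq_map => c do rewrite /= (evproj_rescale X c k_neq0 L_perm) -linearB.
have [f f_bij C'E] := perm_eq_map_nth_bij 0 0 C_perm.
have [Fn [Gn [eigsplit' perms]]] := vca_eigsplit_rescale f_bij C'E eigsplit.
exists Fn, Gn; split=> //; apply/vca_stepE.
by exists (orth_pinvmx (evmx (flatten Fsh) (scale_pts a X))).
Qed.

Section Runs.
Variables (m : R) (tau : nat) (F Fh : nat -> seq {mpoly R[n]}).
Hypotheses (F0 : F 0%N = [:: m%:MP]) (Fh0 : Fh 0%N = [:: m%:MP]).
Hypothesis F_nonconst :
  forall t, (1 <= t <= tau)%N -> {in F t, forall f, (1 < msize f)%N}.
Hypothesis Fh_perm :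
  forall t, (1 <= t <= tau)%N -> perm_eq (Fh t) (map (rescale a 1) (F t)).

(* The constant [m] starts both runs although [rescale a 1 m = a m]; the
   factors [k] absorb this and do not change projections (evcoef_scale). *)
Lemma flatten_run_rescale :
  exists2 k : {mpoly R[n]} -> R, (forall f, k f != 0) &
    perm_eq (flatten [seq Fh t | t <- iota 0 tau.+1])
      [seq k f *: rescale a 1 f | f <- flatten [seq F t | t <- iota 0 tau.+1]].
Proof.
pose k (f : {mpoly R[n]}) := if (msize f <= 1)%N then a^-1 else 1.
exists k; first by move=> f; rewrite /k; case: ifP; rewrite ?invr_eq0 ?oner_eq0.
rewrite map_flatten -map_comp; apply: perm_flatten_map => -[_|t].
  by rewrite /= F0 Fh0 /= /k msizeC leq_b1 rescaleC -mul_mpolyC -mpolyCM mulKf.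
rewrite mem_iota add0n ltnS => t_le /=.
have -> : [seq k f *: rescale a 1 f | f <- F t.+1] = map (rescale a 1) (F t.+1).
  apply/eq_in_map => f /(@F_nonconst t.+1 t_le).
  by rewrite /k ltnNge => /negbTE ->; rewrite scale1r.
exact: (@Fh_perm t.+1 t_le).
Qed.

Lemma vca_Cpre_rescale : (1 <= tau)%N ->
  perm_eq (vca_Cpre [seq Fh t | t <- iota 0 tau.+1])
    (map (rescale a 2) (vca_Cpre [seq F t | t <- iota 0 tau.+1])).
Proof.
move=> tau_gt0; rewrite !vca_Cpre_prod //.
have Fhtau_perm : perm_eq (Fh tau) (map (rescale a 1) (F tau)).
  by apply: Fh_perm; rewrite tau_gt0 leqnn.
apply: perm_trans (perm_allpairs _ (@Fh_perm 1 tau_gt0) Fhtau_perm) _.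
rewrite allpairs_mapl allpairs_mapr map_allpairs.
by under eq_allpairs => p q do rewrite rescaleM.
Qed.

End Runs.
End ScaledRun.

Theorem lemma8 (R : rcfType) (n : nat) (X : seq 'rV[R]_n) (eps alpha m : R)
    (tau : nat) (F G Fh Gh : nat -> seq {mpoly R[n]}) :
  0 <= eps -> alpha != 0 -> m != 0 -> (1 <= tau)%N ->
  vca_run m X eps F G tau.+1 ->
  vca_run m (scale_pts alpha X) (`|alpha| * eps) Fh Gh tau ->
  (forall t, (t <= tau)%N ->
     size (F t) = size (Fh t) /\
     matched alpha (F t) (Fh t) /\ matched alpha (G t) (Gh t)) ->
  exists Fn Gn : seq {mpoly R[n]},
    vca_step (scale_pts alpha X) (`|alpha| * eps)
      [seq Fh k | k <- iota 0 tau.+1] Fn Gn /\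
    size (F tau.+1) = size Fn /\
    matched alpha (F tau.+1) Fn /\ matched alpha (G tau.+1) Gn.
Proof.
move=> eps_ge0 alpha_neq0 m_neq0 tau_gt0 run runh matching.
have F_nonconst t : (1 <= t <= tau)%N -> {in F t, forall f, (1 < msize f)%N}.
  case/andP=> t_gt0 t_le; apply: vca_run_nonconst run _ eps_ge0 m_neq0 _.
  by rewrite t_gt0 leqW.
have Fh_perm t : (1 <= t <= tau)%N -> perm_eq (Fh t) (map (rescale alpha 1) (F t)).
  move=> t_range; have [_ [Fh_matched _]] := matching t (proj2 (andP t_range)).
  exact: (matched_nonconstE alpha_neq0 (F_nonconst t t_range) Fh_matched).
have [k k_neq0 basis_perm] :=
  flatten_run_rescale alpha_neq0 run.1 runh.1 F_nonconst Fh_perm.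
have [Fn [Gn [step [F_perm G_perm]]]] :=
  vca_step_rescale alpha_neq0 k_neq0 (vca_run_pairwise run (leqnSn tau))
    (vca_run_pairwise runh (leqnn tau)) basis_perm
    (vca_Cpre_rescale Fh_perm tau_gt0) (run.2.2 tau.+1 (leqnn tau.+1)).
exists Fn, Gn; split=> //; split; first by rewrite -(perm_size F_perm) size_map.
by split; apply: matched_rescale.
Qed.
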